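(* In $\mathbf{Bigpd}$, the cofibrations and the trivial fibrations (morphisms that are both fibrations and weak equivalences) form a weak factorization system.
   Context: A bigroupoid $\mathcal B$ consists of: a set $\mathcal B_0$ of 0-cells; for each $A,B\in\mathcal B_0$ a groupoid $\mathcal B(A,B)$ whose objects are 1-cells $f:A\to B$ and whose arrows are 2-cells; composition functors $*:\mathcal B(B,C)\times\mathcal B(A,B)\to\mathcal B(A,C)$; identity 1-cells $1_A$; inversion functors $(-)^*:\mathcal B(A,B)\to\mathcal B(B,A)$; and natural isomorphisms $\mathbf a:(h*g)*f\Rightarrow h*(g*f)$, $\mathbf l:1_B*f\Rightarrow f$, $\mathbf r:f*1_A\Rightarrow f$, $\mathbf e:f^**f\Rightarrow 1_A$, $\mathbf i:1_B\Rightarrow f*f^*$, such that the pentagon for $\mathbf a$ commutes, $(\mathrm{id}*\mathbf l)\circ\mathbf a=\mathbf r*\mathrm{id}$, and $\mathbf r_f\circ(\mathrm{id}*\mathbf e_f)\circ\mathbf a\circ(\mathbf i_f*\mathrm{id})=\mathbf l_f$. A morphism $(F,\phi):\mathcal A\to\mathcal B$ consists of a function on 0-cells, functors $F_{A,A'}:\mathcal A(A,A')\to\mathcal B(FA,FA')$ and natural isomorphisms $\phi_{g,f}:Fg*Ff\Rightarrow F(g*f)$, $\phi_A:1_{FA}\Rightarrow F1_A$, $\phi_f:(Ff)^*\Rightarrow F(f^* )$ satisfying $F\mathbf a\circ\phi\circ(\phi*\mathrm{id})=\phi\circ(\mathrm{id}*\phi)\circ\mathbf a$, $F\mathbf r\circ\phi\circ(\mathrm{id}*\phi_A)=\mathbf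 r$, $F\mathbf l\circ\phi\circ(\phi_B*\mathrm{id})=\mathbf l$, $F\mathbf e\circ\phi\circ(\phi_f*\mathrm{id})=\phi_A\circ\mathbf e$, $F\mathbf i\circ\phi_B=\phi\circ(\mathrm{id}*\phi_f)\circ\mathbf i$; composition is $(G,\gamma)\circ(F,\phi)=(GF,G\phi\circ\gamma F)$. $\mathbf{Bigpd}$ is the category of small bigroupoids and morphisms. Fibration: (1) for every 0-cell $A'$ of $\mathcal A$ and 1-cell $b:B\to FA'$ there is $a:A\to A'$ with $FA=B$, $Fa=b$; (2) for every 1-cell $a'$ and 2-cell $\beta:b\Rightarrow Fa'$ there is $\alpha:a\Rightarrow a'$ with $Fa=b$, $F\alpha=\beta$. Cofibration: injective on 0-cells and each $F_{A,A'}$ injective on objects. Weak equivalence: every 0-cell $B$ of $\mathcal B$ admits a 1-cell $B\to FA'$ for some 0-cell $A'$ of $\mathcal A$, and each $F_{A,A'}$ is an equivalence of categories. A weak factorization system is a pair $(\mathcal L,\mathcal R)$ of classes of morphisms such that every morphism factors as a map in $\mathcal L$ followed by a map in $\mathcal R$, and $\mathcal L$ (resp. $\mathcal R$) is exactly the class of maps with the left (resp. right) lifting property with respect to $\mathcal R$ (resp. $\mathcal L$). *)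

From Stdlib Require Import Init.

(* Bigroupoids.  2-cells form a groupoid (all laws are strict equalities
   of 2-cells); composition, identity and inversion are functors; the
   structural 2-cells a, l, r, e, i are natural (they are automatically
   isomorphisms since every 2-cell is invertible). *)
Record Bigroupoid : Type := {
  ob : Type;
  hom : ob -> ob -> Type;
  cell : forall {A B : ob}, hom A B -> hom A B -> Type;
  vcomp : forall {A B} {f g h : hom A B}, cell g h -> cell f g -> cell f h;
  vid : forall {A B} (f : hom A B), cell f f;
  vinv : forall {A B} {f g : hom A B}, cell f g -> cell g f;
  vcomp_assoc : forall A B (f g h k : hom A B) (a : cell f g) (b : cell g h) (c : cell h k),
      vcomp c (vcomp b a) = vcomp (vcomp c b) a;
  vcomp_id_l : forall A B (f g : hom A B) (a : cell f g), vcomp (vid g) a = a;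
  vcomp_id_r : forall A B (f g : hom A B) (a : cell f g), vcomp a (vid f) = a;
  vinv_l : forall A B (f g : hom A B) (a : cell f g), vcomp (vinv a) a = vid f;
  vinv_r : forall A B (f g : hom A B) (a : cell f g), vcomp a (vinv a) = vid g;
  hc : forall {A B C}, hom B C -> hom A B -> hom A C;
  hc2 : forall {A B C} {g g' : hom B C} {f f' : hom A B},
      cell g g' -> cell f f' -> cell (hc g f) (hc g' f');
  hc2_id : forall A B C (g : hom B C) (f : hom A B), hc2 (vid g) (vid f) = vid (hc g f);
  hc2_comp : forall A B C (g g' g'' : hom B C) (f f' f'' : hom A B)
      (b : cell g g') (b' : cell g' g'') (a : cell f f') (a' : cell f' f''),
      hc2 (vcomp b' b) (vcomp a' a) = vcomp (hc2 b' a') (hc2 b a);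
  id1 : forall A, hom A A;
  inv1 : forall {A B}, hom A B -> hom B A;
  inv2 : forall {A B} {f g : hom A B}, cell f g -> cell (inv1 f) (inv1 g);
  inv2_id : forall A B (f : hom A B), inv2 (vid f) = vid (inv1 f);
  inv2_comp : forall A B (f g h : hom A B) (a : cell f g) (b : cell g h),
      inv2 (vcomp b a) = vcomp (inv2 b) (inv2 a);
  assoc : forall {A B C D} (h : hom C D) (g : hom B C) (f : hom A B),
      cell (hc (hc h g) f) (hc h (hc g f));
  assoc_nat : forall A B C D (h h' : hom C D) (g g' : hom B C) (f f' : hom A B)
      (c : cell h h') (b : cell g g') (a : cell f f'),
      vcomp (assoc h' g' f') (hc2 (hc2 c b) a) = vcomp (hc2 c (hc2 b a)) (assoc h g f);
  lu : forall {A B} (f : hom A B), cell (hc (id1 B) f) f;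
  lu_nat : forall A B (f f' : hom A B) (a : cell f f'),
      vcomp (lu f') (hc2 (vid (id1 B)) a) = vcomp a (lu f);
  ru : forall {A B} (f : hom A B), cell (hc f (id1 A)) f;
  ru_nat : forall A B (f f' : hom A B) (a : cell f f'),
      vcomp (ru f') (hc2 a (vid (id1 A))) = vcomp a (ru f);
  ev : forall {A B} (f : hom A B), cell (hc (inv1 f) f) (id1 A);
  ev_nat : forall A B (f f' : hom A B) (a : cell f f'),
      vcomp (ev f') (hc2 (inv2 a) a) = vcomp (vid (id1 A)) (ev f);
  coev : forall {A B} (f : hom A B), cell (id1 B) (hc f (inv1 f));
  coev_nat : forall A B (f f' : hom A B) (a : cell f f'),
      vcomp (coev f') (vid (id1 B)) = vcomp (hc2 a (inv2 a)) (coev f);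
  pentagon : forall A B C D E (k : hom D E) (h : hom C D) (g : hom B C) (f : hom A B),
      vcomp (hc2 (vid k) (assoc h g f))
            (vcomp (assoc k (hc h g) f) (hc2 (assoc k h g) (vid f)))
      = vcomp (assoc k h (hc g f)) (assoc (hc k h) g f);
  triangle : forall A B C (g : hom B C) (f : hom A B),
      vcomp (hc2 (vid g) (lu f)) (assoc g (id1 B) f) = hc2 (ru g) (vid f);
  inverse_coh : forall A B (f : hom A B),
      vcomp (ru f) (vcomp (hc2 (vid f) (ev f))
                   (vcomp (assoc f (inv1 f) f) (hc2 (coev f) (vid f))))
      = lu f
}.

Arguments ob _ : clear implicits.
Arguments hom {_} _ _.
Arguments cell {_ _ _} _ _.
Arguments vcomp {_ _ _ _ _ _} _ _.
Arguments vid {_ _ _} _.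
Arguments vinv {_ _ _ _ _} _.
Arguments hc {_ _ _ _} _ _.
Arguments hc2 {_ _ _ _ _ _ _ _} _ _.
Arguments id1 {_} _.
Arguments inv1 {_ _ _} _.
Arguments inv2 {_ _ _ _ _} _.
Arguments assoc {_ _ _ _ _} _ _ _.
Arguments lu {_ _ _} _.
Arguments ru {_ _ _} _.
Arguments ev {_ _ _} _.
Arguments coev {_ _ _} _.

Record MorData (X Y : Bigroupoid) : Type := {
  F0 : ob X -> ob Y;
  F1 : forall {A B : ob X}, hom A B -> hom (F0 A) (F0 B);
  F2 : forall {A B : ob X} {f g : hom A B}, cell f g -> cell (F1 f) (F1 g);
  phic : forall {A B C : ob X} (g : hom B C) (f : hom A B),
      cell (hc (F1 g) (F1 f)) (F1 (hc g f));
  phiu : forall A : ob X, cell (id1 (F0 A)) (F1 (id1 A));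
  phii : forall {A B : ob X} (f : hom A B), cell (inv1 (F1 f)) (F1 (inv1 f))
}.

Arguments F0 {_ _} _ _.
Arguments F1 {_ _} _ {_ _} _.
Arguments F2 {_ _} _ {_ _ _ _} _.
Arguments phic {_ _} _ {_ _ _} _ _.
Arguments phiu {_ _} _ _.
Arguments phii {_ _} _ {_ _} _.

Definition IsMor {X Y : Bigroupoid} (F : MorData X Y) : Prop :=
  (forall A B (f : hom A B), F2 F (vid f) = vid (F1 F f)) /\
  (forall A B (f g h : hom A B) (a : cell f g) (b : cell g h),
      F2 F (vcomp b a) = vcomp (F2 F b) (F2 F a)) /\
  (forall A B C (g g' : hom B C) (f f' : hom A B) (b : cell g g') (a : cell f f'),
      vcomp (phic F g' f') (hc2 (F2 F b) (F2 F a)) = vcomp (F2 F (hc2 b a)) (phic F g f)) /\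
  (forall A B (f f' : hom A B) (a : cell f f'),
      vcomp (phii F f') (inv2 (F2 F a)) = vcomp (F2 F (inv2 a)) (phii F f)) /\
  (forall A B C D (h : hom C D) (g : hom B C) (f : hom A B),
      vcomp (F2 F (assoc h g f)) (vcomp (phic F (hc h g) f) (hc2 (phic F h g) (vid (F1 F f))))
      = vcomp (phic F h (hc g f)) (vcomp (hc2 (vid (F1 F h)) (phic F g f))
                                        (assoc (F1 F h) (F1 F g) (F1 F f)))) /\
  (forall A B (f : hom A B),
      vcomp (F2 F (ru f)) (vcomp (phic F f (id1 A)) (hc2 (vid (F1 F f)) (phiu F A)))
      = ru (F1 F f)) /\
  (forall A B (f : hom A B),
      vcomp (F2 F (lu f)) (vcomp (phic F (id1 B) f) (hc2 (phiu F B) (vid (F1 F f))))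
      = lu (F1 F f)) /\
  (forall A B (f : hom A B),
      vcomp (F2 F (ev f)) (vcomp (phic F (inv1 f) f) (hc2 (phii F f) (vid (F1 F f))))
      = vcomp (phiu F A) (ev (F1 F f))) /\
  (forall A B (f : hom A B),
      vcomp (F2 F (coev f)) (phiu F B)
      = vcomp (phic F f (inv1 f)) (vcomp (hc2 (vid (F1 F f)) (phii F f)) (coev (F1 F f)))).

Definition compD {X Y Z : Bigroupoid} (G : MorData Y Z) (F : MorData X Y) : MorData X Z :=
  {| F0 := fun A => F0 G (F0 F A);
     F1 := fun A B f => F1 G (F1 F f);
     F2 := fun A B f g a => F2 G (F2 F a);
     phic := fun A B C g f => vcomp (F2 G (phic F g f)) (phic G (F1 F g) (F1 F f));
     phiu := fun A => vcomp (F2 G (phiu F A)) (phiu G (F0 F A));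
     phii := fun A B f => vcomp (F2 G (phii F f)) (phii G (F1 F f)) |}.

Definition fibration {X Y : Bigroupoid} (F : MorData X Y) : Prop :=
  (forall (A' : ob X) (B : ob Y) (b : hom B (F0 F A')),
     exists (A : ob X) (a : hom A A'),
       existT (fun B0 => hom B0 (F0 F A')) (F0 F A) (F1 F a)
       = existT (fun B0 => hom B0 (F0 F A')) B b) /\
  (forall (A A' : ob X) (a' : hom A A') (b : hom (F0 F A) (F0 F A')) (beta : cell b (F1 F a')),
     exists (a : hom A A') (alpha : cell a a'),
       existT (fun b0 => cell b0 (F1 F a')) (F1 F a) (F2 F alpha)
       = existT (fun b0 => cell b0 (F1 F a')) b beta).

Definition cofibration {X Y : Bigroupoid} (F : MorData X Y) : Prop :=
  (forall A A' : ob X, F0 F A = F0 F A' -> A = A') /\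
  (forall (A A' : ob X) (f g : hom A A'), F1 F f = F1 F g -> f = g).

(* Equivalence of categories for the functor F_{A,A'} : X(A,A') -> Y(FA,FA'):
   a functor G back together with natural isomorphisms 1 => GF and FG => 1
   (natural transformations between groupoid-valued functors are automatically
   invertible). *)
Definition hom_equivalence {X Y : Bigroupoid} (F : MorData X Y) (A A' : ob X) : Prop :=
  exists (G1 : hom (F0 F A) (F0 F A') -> hom A A')
         (G2 : forall g g' : hom (F0 F A) (F0 F A'), cell g g' -> cell (G1 g) (G1 g'))
         (eta : forall f : hom A A', cell f (G1 (F1 F f)))
         (eps : forall g : hom (F0 F A) (F0 F A'), cell (F1 F (G1 g)) g),
    (forall g, G2 g g (vid g) = vid (G1 g)) /\
    (forall g g' g'' (b : cell g g') (b' : cell g' g''),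
        G2 g g'' (vcomp b' b) = vcomp (G2 g' g'' b') (G2 g g' b)) /\
    (forall (f f' : hom A A') (a : cell f f'),
        vcomp (eta f') a = vcomp (G2 _ _ (F2 F a)) (eta f)) /\
    (forall (g g' : hom (F0 F A) (F0 F A')) (b : cell g g'),
        vcomp (eps g') (F2 F (G2 g g' b)) = vcomp b (eps g)).

Definition weak_equivalence {X Y : Bigroupoid} (F : MorData X Y) : Prop :=
  (forall B : ob Y, exists (A' : ob X), inhabited (hom B (F0 F A'))) /\
  (forall A A' : ob X, hom_equivalence F A A').

Definition trivial_fibration {X Y : Bigroupoid} (F : MorData X Y) : Prop :=
  fibration F /\ weak_equivalence F.

Definition lifting {A B X Y : Bigroupoid} (i : MorData A B) (p : MorData X Y) : Prop :=
  forall (u : MorData A X) (v : MorData B Y),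
    IsMor u -> IsMor v -> compD p u = compD v i ->
    exists h : MorData B X, IsMor h /\ compD h i = u /\ compD p h = v.

Definition weak_factorization_system
    (L R : forall X Y : Bigroupoid, MorData X Y -> Prop) : Prop :=
  (forall (X Y : Bigroupoid) (f : MorData X Y), IsMor f ->
     exists (Z : Bigroupoid) (i : MorData X Z) (p : MorData Z Y),
       IsMor i /\ IsMor p /\ L X Z i /\ R Z Y p /\ compD p i = f) /\
  (forall (A B : Bigroupoid) (i : MorData A B), IsMor i ->
     (L A B i <-> forall (X Y : Bigroupoid) (p : MorData X Y),
                    IsMor p -> R X Y p -> lifting i p)) /\
  (forall (X Y : Bigroupoid) (p : MorData X Y), IsMor p ->
     (R X Y p <-> forall (A B : Bigroupoid) (i : MorData A B),
                    IsMor i -> L A B i -> lifting i p)).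

(** Factor [f : X -> Y] through the bigroupoid whose 0-cells are [ob X + ob Y], whose 1-cells
    are the 1-cells of [X] together with all 1-cells of [Y] between the images, and whose 2-cells
    are the 2-cells of [Y] between the images. The inclusion of [X] is injective on 0- and
    1-cells, a cofibration; the projection to [Y] is bijective on 2-cells and split surjective on
    0- and 1-cells, a trivial fibration.

    A cofibration [i] lifts against a trivial fibration [p]: on cells in the image of [i] the lift
    is dictated by the top of the square (unambiguously, as [i] is injective), elsewhere choose
    preimages under [p], which is surjective on 0- and 1-cells and fully faithful on 2-cells.
    Faithfulness then makes the lift a morphism and makes it extend the top of the square.

    The converse inclusions are the retract argument: a map with the left lifting property lifts
    against its own factorization and so is a left factor of a cofibration; a map with the right
    lifting property is a retract of the trivial fibration through which it factors. *)

From Stdlib Require Import FunctionalExtensionality ClassicalEpsilon Classical JMeq.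

Lemma vcomp_cancel_l {Y : Bigroupoid} {A B : ob Y} {f g h : hom A B} (c : cell g h)
    {a b : cell f g} :
  vcomp c a = vcomp c b -> a = b.
Proof.
  intro E.
  rewrite <- (vcomp_id_l _ _ _ _ _ a), <- (vcomp_id_l _ _ _ _ _ b), <- (vinv_l _ _ _ _ _ c).
  rewrite <- !vcomp_assoc, E. reflexivity.
Qed.

Lemma vcomp_cancel_r {Y : Bigroupoid} {A B : ob Y} {f g h : hom A B} (c : cell f g)
    {a b : cell g h} :
  vcomp a c = vcomp b c -> a = b.
Proof.
  intro E.
  rewrite <- (vcomp_id_r _ _ _ _ _ a), <- (vcomp_id_r _ _ _ _ _ b), <- (vinv_r _ _ _ _ _ c).
  rewrite !vcomp_assoc, E. reflexivity.
Qed.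

Lemma vcompK {Y : Bigroupoid} {A B : ob Y} {f g h : hom A B} (b : cell g h) (c : cell f g) :
  vcomp (vcomp b c) (vinv c) = b.
Proof. rewrite <- vcomp_assoc, vinv_r, vcomp_id_r. reflexivity. Qed.

Lemma vcompVK {Y : Bigroupoid} {A B : ob Y} {f g h : hom A B} (b : cell g h) (c : cell g f) :
  vcomp (vcomp b (vinv c)) c = b.
Proof. rewrite <- vcomp_assoc, vinv_l, vcomp_id_r. reflexivity. Qed.

Lemma hc2_vcompA {Y : Bigroupoid} {A B C : ob Y} {g g' g'' : hom B C} {f f' f'' : hom A B}
    (b : cell g g') (b' : cell g' g'') (a : cell f f') (a' : cell f' f'')
    {e : hom A C} (x : cell e (hc g f)) :
  vcomp (hc2 b' a') (vcomp (hc2 b a) x) = vcomp (hc2 (vcomp b' b) (vcomp a' a)) x.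
Proof. rewrite vcomp_assoc, hc2_comp. reflexivity. Qed.

Lemma eq_JMeq {T : Type} {x y : T} : x = y -> JMeq x y.
Proof. intros ->. reflexivity. Qed.

Lemma JMeq_hom_exists {Y : Bigroupoid} {s t s' t' : ob Y} :
  s = s' -> t = t' -> forall x : hom s' t', exists y : hom s t, JMeq y x.
Proof. intros; subst; eauto. Qed.

Lemma JMeq_cell_exists {Y : Bigroupoid} {s t s' t' : ob Y} {x y : hom s t} {x' y' : hom s' t'} :
  s = s' -> t = t' -> JMeq x x' -> JMeq y y' ->
  forall g : cell x' y', exists b : cell x y, JMeq b g.
Proof. intros; subst; eauto. Qed.

Lemma JMeq_F1 {X Y : Bigroupoid} (F : MorData X Y) {s t s' t' : ob X}
    {x : hom s t} {x' : hom s' t'} :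
  s = s' -> t = t' -> JMeq x x' -> JMeq (F1 F x) (F1 F x').
Proof. intros; subst; eauto. Qed.

Lemma JMeq_F2 {X Y : Bigroupoid} (F : MorData X Y) {s t s' t' : ob X}
    {x y : hom s t} {x' y' : hom s' t'} {g : cell x y} {g' : cell x' y'} :
  s = s' -> t = t' -> JMeq x x' -> JMeq y y' -> JMeq g g' -> JMeq (F2 F g) (F2 F g').
Proof. intros; subst; eauto. Qed.

Lemma JMeq_hc {Y : Bigroupoid} {a b c a' b' c' : ob Y} {x : hom b c} {y : hom a b}
    {x' : hom b' c'} {y' : hom a' b'} :
  a = a' -> b = b' -> c = c' -> JMeq x x' -> JMeq y y' -> JMeq (hc x y) (hc x' y').
Proof. intros; subst; eauto. Qed.

Lemma JMeq_id1 {Y : Bigroupoid} {a a' : ob Y} : a = a' -> JMeq (id1 a) (id1 a').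
Proof. intros; subst; reflexivity. Qed.

Lemma JMeq_inv1 {Y : Bigroupoid} {a b a' b' : ob Y} {x : hom a b} {x' : hom a' b'} :
  a = a' -> b = b' -> JMeq x x' -> JMeq (inv1 x) (inv1 x').
Proof. intros; subst; eauto. Qed.

Lemma existT_JMeq {T : Type} (P : T -> Type) {s s' : T} {x : P s} {y : P s'} :
  s = s' -> JMeq x y -> existT P s x = existT P s' y.
Proof. intros; subst; eauto. Qed.

Lemma existT_inv_JMeq {T : Type} (P : T -> Type) {s s' : T} {x : P s} {y : P s'} :
  existT P s x = existT P s' y -> s = s' /\ JMeq x y.
Proof.
  intro E. split.
  - exact (f_equal (@projT1 _ _) E).
  - exact (match E in _ = w return JMeq x (projT2 w) with eq_refl => JMeq_refl end).
Qed.

Definition witness {T : Type} {P : T -> Prop} (e : exists x, P x) : T :=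
  proj1_sig (constructive_indefinite_description P e).

Lemma witness_spec {T : Type} {P : T -> Prop} (e : exists x, P x) : P (witness e).
Proof. exact (proj2_sig (constructive_indefinite_description P e)). Qed.

Lemma MorData_ext {X Y : Bigroupoid} (M N : MorData X Y) :
  (forall A, F0 M A = F0 N A) ->
  (forall A B (f : hom A B), JMeq (F1 M f) (F1 N f)) ->
  (forall A B (f g : hom A B) (a : cell f g), JMeq (F2 M a) (F2 N a)) ->
  (forall A B C (g : hom B C) (f : hom A B), JMeq (phic M g f) (phic N g f)) ->
  (forall A, JMeq (phiu M A) (phiu N A)) ->
  (forall A B (f : hom A B), JMeq (phii M f) (phii N f)) ->
  M = N.
Proof.
  destruct M as [m0 m1 m2 mc mu mi], N as [n0 n1 n2 nc nu ni]; cbn.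
  intros e0 e1 e2 ec eu ei.
  assert (E0 : m0 = n0) by (apply functional_extensionality; exact e0). subst n0.
  assert (E1 : m1 = n1).
  { repeat (apply functional_extensionality_dep; intro). apply JMeq_eq, e1. }
  subst n1.
  assert (E2 : m2 = n2).
  { repeat (apply functional_extensionality_dep; intro). apply JMeq_eq, e2. }
  assert (Ec : mc = nc).
  { repeat (apply functional_extensionality_dep; intro). apply JMeq_eq, ec. }
  assert (Eu : mu = nu).
  { apply functional_extensionality_dep; intro. apply JMeq_eq, eu. }
  assert (Ei : mi = ni).
  { repeat (apply functional_extensionality_dep; intro). apply JMeq_eq, ei. }
  subst. reflexivity.
Qed.

Section MorData_eq.
Context {X Y : Bigroupoid} {M N : MorData X Y} (E : M = N).

Lemma F0_eq A : F0 M A = F0 N A.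
Proof. subst. reflexivity. Qed.

Lemma F1_eq {A B} (f : hom A B) : JMeq (F1 M f) (F1 N f).
Proof. subst. reflexivity. Qed.

Lemma F2_eq {A B} {f g : hom A B} (a : cell f g) : JMeq (F2 M a) (F2 N a).
Proof. subst. reflexivity. Qed.

Lemma phic_eq {A B C} (g : hom B C) (f : hom A B) : JMeq (phic M g f) (phic N g f).
Proof. subst. reflexivity. Qed.

Lemma phiu_eq A : JMeq (phiu M A) (phiu N A).
Proof. subst. reflexivity. Qed.

Lemma phii_eq {A B} (f : hom A B) : JMeq (phii M f) (phii N f).
Proof. subst. reflexivity. Qed.

End MorData_eq.

Definition idD (X : Bigroupoid) : MorData X X :=
  @Build_MorData X X (fun A => A) (fun A B f => f) (fun A B f g a => a)
    (fun A B C g h => vid _) (fun A => vid _) (fun A B g => vid _).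

Lemma idD_IsMor (X : Bigroupoid) : IsMor (idD X).
Proof.
  repeat split; intros; cbn;
    rewrite ?hc2_id, ?inv2_id, ?vcomp_id_l, ?vcomp_id_r; reflexivity.
Qed.

Lemma compD_idD_l {X Y : Bigroupoid} (f : MorData X Y) : compD (idD Y) f = f.
Proof.
  apply MorData_ext; intros; cbn; rewrite ?vcomp_id_r; reflexivity.
Qed.

Lemma compD_idD_r {X Y : Bigroupoid} (f : MorData X Y) : IsMor f -> compD f (idD X) = f.
Proof.
  intros [Fid _].
  apply MorData_ext; intros; cbn; rewrite ?Fid, ?vcomp_id_l; reflexivity.
Qed.

Lemma compD_assoc {W X Y Z : Bigroupoid} (h : MorData Y Z) (g : MorData X Y) (f : MorData W X) :
  IsMor h -> compD h (compD g f) = compD (compD h g) f.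
Proof.
  intros (_ & h_comp & _).
  apply MorData_ext; intros; cbn; rewrite ?h_comp, ?vcomp_assoc; reflexivity.
Qed.

Definition faithful {X Y : Bigroupoid} (F : MorData X Y) : Prop :=
  forall (A A' : ob X) (f f' : hom A A') (a b : cell f f'), F2 F a = F2 F b -> a = b.

Definition full {X Y : Bigroupoid} (F : MorData X Y) : Prop :=
  forall (A A' : ob X) (f f' : hom A A') (b : cell (F1 F f) (F1 F f')),
    exists a : cell f f', F2 F a = b.

Lemma compD_faithful_inj {X Y Z : Bigroupoid} (p : MorData Y Z) (M N : MorData X Y) :
  faithful p ->
  (forall A, F0 M A = F0 N A) -> (forall A B (f : hom A B), JMeq (F1 M f) (F1 N f)) ->
  compD p M = compD p N -> M = N.
Proof.
  intros p_faithful e0 e1 E.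
  destruct M as [m0 m1 m2 mc mu mi], N as [n0 n1 n2 nc nu ni]; cbn in *.
  assert (E0 : m0 = n0) by (apply functional_extensionality; exact e0). subst n0.
  assert (E1 : m1 = n1).
  { repeat (apply functional_extensionality_dep; intro). apply JMeq_eq, e1. }
  subst n1.
  apply MorData_ext; intros; cbn; try reflexivity; apply eq_JMeq, p_faithful.
  - exact (JMeq_eq (F2_eq E a)).
  - apply (vcomp_cancel_r (phic p (m1 _ _ g) (m1 _ _ f))). exact (JMeq_eq (phic_eq E g f)).
  - apply (vcomp_cancel_r (phiu p (m0 A))). exact (JMeq_eq (phiu_eq E A)).
  - apply (vcomp_cancel_r (phii p (m1 _ _ f))). exact (JMeq_eq (phii_eq E f)).
Qed.

Ltac reassoc := repeat rewrite <- vcomp_assoc.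

Ltac rewrite_reassoc E :=
  let E' := fresh in pose proof E as E'; repeat rewrite <- vcomp_assoc in E'; rewrite E'; clear E'.

Ltac push_phic FnatR Fid := rewrite FnatR, Fid, ?hc2_vcompA, <- ?hc2_comp, vcomp_id_l.

(* Each law for [G] is checked after applying the faithful [F]; cancelling the comparison cells
   of [F] turns it into the same law for [compD F G], rewritten by that law for [F]. *)
Lemma IsMor_reflect {W X Y : Bigroupoid} (F : MorData X Y) (G : MorData W X) :
  IsMor F -> faithful F -> IsMor (compD F G) -> IsMor G.
Proof.
  intros (Fid & Fcomp & Fnat & Finat & Fas & Fru & Flu & Fev & Fco) Ff
         (FGid & FGcomp & FGnat & FGinat & FGas & FGru & FGlu & FGev & FGco).
  cbn in FGid, FGcomp, FGnat, FGinat, FGas, FGru, FGlu, FGev, FGco.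
  assert (FnatR : forall A B C (g g' : hom B C) (f f' : hom A B) (b : cell g g') (a : cell f f')
                         e (x : cell e _),
     vcomp (F2 F (hc2 b a)) (vcomp (phic F g f) x)
     = vcomp (phic F g' f') (vcomp (hc2 (F2 F b) (F2 F a)) x)).
  { intros. rewrite !vcomp_assoc, Fnat. reflexivity. }
  repeat split.
  - intros. apply Ff. rewrite Fid. apply FGid.
  - intros. apply Ff. rewrite Fcomp. apply FGcomp.
  - intros A B C g g' f f' b a. apply Ff. rewrite !Fcomp.
    apply (vcomp_cancel_r (phic F (F1 G g) (F1 G f))).
    reassoc. rewrite <- Fnat. rewrite_reassoc (FGnat _ _ _ _ _ _ _ b a).
    reflexivity.
  - intros A B f f' a. apply Ff. rewrite !Fcomp.
    apply (vcomp_cancel_r (phii F (F1 G f))).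
    reassoc. rewrite <- Finat. rewrite_reassoc (FGinat _ _ _ _ a). reflexivity.
  - intros A B C D h g f. apply Ff. rewrite !Fcomp.
    apply (vcomp_cancel_r (vcomp (phic F (hc (F1 G h) (F1 G g)) (F1 G f))
                                 (hc2 (phic F (F1 G h) (F1 G g)) (vid (F1 F (F1 G f)))))).
    reassoc. push_phic FnatR Fid.
    rewrite_reassoc (FGas _ _ _ _ h g f). rewrite_reassoc (Fas _ _ _ _ (F1 G h) (F1 G g) (F1 G f)).
    push_phic FnatR Fid. reflexivity.
  - intros A B f. apply Ff. rewrite !Fcomp.
    apply (vcomp_cancel_r (vcomp (phic F (F1 G f) (id1 (F0 G A)))
                                 (hc2 (vid (F1 F (F1 G f))) (phiu F (F0 G A))))).
    reassoc. push_phic FnatR Fid.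
    rewrite_reassoc (FGru _ _ f). rewrite_reassoc (Fru _ _ (F1 G f)). reflexivity.
  - intros A B f. apply Ff. rewrite !Fcomp.
    apply (vcomp_cancel_r (vcomp (phic F (id1 (F0 G B)) (F1 G f))
                                 (hc2 (phiu F (F0 G B)) (vid (F1 F (F1 G f)))))).
    reassoc. push_phic FnatR Fid.
    rewrite_reassoc (FGlu _ _ f). rewrite_reassoc (Flu _ _ (F1 G f)). reflexivity.
  - intros A B f. apply Ff. rewrite !Fcomp.
    apply (vcomp_cancel_r (vcomp (phic F (inv1 (F1 G f)) (F1 G f))
                                 (hc2 (phii F (F1 G f)) (vid (F1 F (F1 G f)))))).
    reassoc. push_phic FnatR Fid.
    rewrite_reassoc (FGev _ _ f). rewrite_reassoc (Fev _ _ (F1 G f)). reflexivity.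
  - intros A B f. apply Ff. rewrite !Fcomp.
    apply (vcomp_cancel_r (phiu F (F0 G B))).
    reassoc. rewrite_reassoc (FGco _ _ f). rewrite_reassoc (Fco _ _ (F1 G f)).
    push_phic FnatR Fid. reflexivity.
Qed.

Section Factorization.
Context {X Y : Bigroupoid} (f : MorData X Y).

Definition fact_base (z : ob X + ob Y) : ob Y :=
  match z with inl a => F0 f a | inr y => y end.

Definition fact_Xhom (z z' : ob X + ob Y) : Type :=
  match z, z' with inl a, inl a' => hom a a' | _, _ => Empty_set end.

Definition fact_hom (z z' : ob X + ob Y) : Type :=
  (fact_Xhom z z' + hom (fact_base z) (fact_base z'))%type.

Definition fact_hom_base {z z' : ob X + ob Y} (u : fact_hom z z')
  : hom (fact_base z) (fact_base z') :=
  match u with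
  | inr y => y
  | inl x =>
    (match z, z' return fact_Xhom z z' -> hom (fact_base z) (fact_base z') with
     | inl a, inl a' => fun x => F1 f x
     | inl _, inr _ | inr _, _ => fun e => match e with end
     end) x
  end.

Local Notation P1 := fact_hom_base.

Definition fact_bigpd : Bigroupoid :=
  {| ob := ob X + ob Y;
     hom := fact_hom;
     cell := fun A B u v => cell (P1 u) (P1 v);
     vcomp := fun A B u v w b a => vcomp b a;
     vid := fun A B u => vid (P1 u);
     vinv := fun A B u v a => vinv a;
     vcomp_assoc := fun A B f0 g h k a b c => vcomp_assoc _ _ _ _ _ _ _ a b c;
     vcomp_id_l := fun A B f0 g a => vcomp_id_l _ _ _ _ _ a;
     vcomp_id_r := fun A B f0 g a => vcomp_id_r _ _ _ _ _ a;
     vinv_l := fun A B f0 g a => vinv_l _ _ _ _ _ a;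
     vinv_r := fun A B f0 g a => vinv_r _ _ _ _ _ a;
     hc := fun A B C g f0 => inr (hc (P1 g) (P1 f0));
     hc2 := fun A B C g g' f0 f' b a => hc2 b a;
     hc2_id := fun A B C g f0 => hc2_id _ _ _ _ (P1 g) (P1 f0);
     hc2_comp := fun A B C g g' g'' f0 f' f'' b b' a a' => hc2_comp _ _ _ _ _ _ _ _ _ _ b b' a a';
     id1 := fun A => inr (id1 (fact_base A));
     inv1 := fun A B u => inr (inv1 (P1 u));
     inv2 := fun A B u v a => inv2 a;
     inv2_id := fun A B u => inv2_id _ _ _ (P1 u);
     inv2_comp := fun A B u v w a b => inv2_comp _ _ _ _ _ _ a b;
     assoc := fun A B C D h g f0 => assoc (P1 h) (P1 g) (P1 f0);
     assoc_nat := fun A B C D h h' g g' f0 f' c b a => assoc_nat _ _ _ _ _ _ _ _ _ _ _ c b a;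
     lu := fun A B u => lu (P1 u);
     lu_nat := fun A B u u' a => lu_nat _ _ _ _ _ a;
     ru := fun A B u => ru (P1 u);
     ru_nat := fun A B u u' a => ru_nat _ _ _ _ _ a;
     ev := fun A B u => ev (P1 u);
     ev_nat := fun A B u u' a => ev_nat _ _ _ _ _ a;
     coev := fun A B u => coev (P1 u);
     coev_nat := fun A B u u' a => coev_nat _ _ _ _ _ a;
     pentagon := fun A B C D E k h g f0 => pentagon _ _ _ _ _ _ (P1 k) (P1 h) (P1 g) (P1 f0);
     triangle := fun A B C g f0 => triangle _ _ _ _ (P1 g) (P1 f0);
     inverse_coh := fun A B u => inverse_coh _ _ _ (P1 u)
  |}.

Definition fact_incl : MorData X fact_bigpd :=
  {| F0 := fun A => (inl A : ob fact_bigpd);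
     F1 := fun A B g => (inl g : fact_hom (inl A) (inl B));
     F2 := fun A B g g' a => (F2 f a : @cell fact_bigpd (inl A) (inl B) (inl g) (inl g'));
     phic := fun A B C g h => phic f g h;
     phiu := fun A => phiu f A;
     phii := fun A B g => phii f g |}.

Definition fact_proj : MorData fact_bigpd Y :=
  @Build_MorData fact_bigpd Y fact_base (fun A B u => P1 u) (fun A B u v a => a)
    (fun A B C g h => vid _) (fun A => vid _) (fun A B g => vid _).

Lemma fact_incl_IsMor : IsMor f -> IsMor fact_incl.
Proof. exact id. Qed.

Lemma fact_proj_IsMor : IsMor fact_proj.
Proof.
  repeat split; intros; cbn;
    rewrite ?hc2_id, ?inv2_id, ?vcomp_id_l, ?vcomp_id_r; reflexivity.
Qed.

Lemma fact_incl_cofibration : cofibration fact_incl.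
Proof. split; cbn; intros; congruence. Qed.

Lemma fact_proj_trivial_fibration : trivial_fibration fact_proj.
Proof.
  split; [split|split].
  - intros A' B b. exists (inr B : ob fact_bigpd), (inr b : fact_hom (inr B) A'). reflexivity.
  - intros A A' a' b beta. exists (inr b : fact_hom A A'), beta. reflexivity.
  - intros B. exists (inr B : ob fact_bigpd). exact (inhabits (id1 B)).
  - intros A A'.
    exists (fun g => (inr g : fact_hom A A')), (fun g g' b => b),
           (fun u => vid (P1 u)), (fun g => vid g).
    repeat split; intros; cbn; rewrite ?vcomp_id_l, ?vcomp_id_r; reflexivity.
Qed.

Lemma fact_proj_incl : compD fact_proj fact_incl = f.
Proof. apply MorData_ext; intros; cbn; rewrite ?vcomp_id_r; reflexivity. Qed.

End Factorization.

Lemma weak_equivalence_faithful {X Y : Bigroupoid} (p : MorData X Y) :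
  weak_equivalence p -> faithful p.
Proof.
  intros [_ Hw] A A' f f' a b Hab.
  destruct (Hw A A') as (G1 & G2 & eta & eps & _ & _ & eta_nat & _).
  apply (vcomp_cancel_l (eta f')). rewrite !eta_nat, Hab. reflexivity.
Qed.

Lemma weak_equivalence_full {X Y : Bigroupoid} (p : MorData X Y) :
  weak_equivalence p -> full p.
Proof.
  intros [_ Hw] A A' f f' b.
  destruct (Hw A A') as (G1 & G2 & eta & eps & _ & _ & eta_nat & eps_nat).
  set (a := vcomp (vinv (eta f')) (vcomp (G2 _ _ b) (eta f))).
  exists a.
  assert (Ga : G2 _ _ (F2 p a) = G2 _ _ b).
  { apply (vcomp_cancel_r (eta f)). rewrite <- eta_nat. unfold a.
    rewrite !vcomp_assoc, vinv_r, vcomp_id_l. reflexivity. }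
  apply (vcomp_cancel_r (eps (F1 p f))). rewrite <- !eps_nat, Ga. reflexivity.
Qed.

Lemma trivial_fibration_surj_ob {X Y : Bigroupoid} (p : MorData X Y) :
  trivial_fibration p -> forall B : ob Y, exists A : ob X, F0 p A = B.
Proof.
  intros [[lift_ob _] [ess_surj _]] B.
  destruct (ess_surj B) as [A' [b]].
  destruct (lift_ob A' B b) as (A & a & E).
  exists A. exact (f_equal (@projT1 _ _) E).
Qed.

Lemma trivial_fibration_surj_hom {X Y : Bigroupoid} (p : MorData X Y) :
  trivial_fibration p ->
  forall (A A' : ob X) (g : hom (F0 p A) (F0 p A')), exists a : hom A A', F1 p a = g.
Proof.
  intros [[_ lift_cell] [_ Hw]] A A' g.
  destruct (Hw A A') as (G1 & G2 & eta & eps & _).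
  destruct (lift_cell A A' (G1 g) g (vinv (eps g))) as (a & alpha & E).
  exists a. exact (f_equal (@projT1 _ _) E).
Qed.

Lemma hom_equivalence_of_full_faithful {X Y : Bigroupoid} (p : MorData X Y) (A A' : ob X) :
  IsMor p -> faithful p -> full p ->
  (forall g : hom (F0 p A) (F0 p A'), exists f : hom A A', F1 p f = g) ->
  hom_equivalence p A A'.
Proof.
  intros (p_id & p_comp & _) p_faithful p_full p_surj.
  pose (G1 g := witness (p_surj g)).
  pose (eps g := match witness_spec (p_surj g) in _ = h return cell (F1 p (G1 g)) h
                 with eq_refl => vid _ end).
  pose (G2 g g' (b : cell g g') :=
          witness (p_full _ _ (G1 g) (G1 g') (vcomp (vinv (eps g')) (vcomp b (eps g))))).
  pose (eta f := witness (p_full _ _ f (G1 (F1 p f)) (vinv (eps (F1 p f))))).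
  assert (p_G2 : forall g g' (b : cell g g'),
             F2 p (G2 g g' b) = vcomp (vinv (eps g')) (vcomp b (eps g)))
    by (intros; exact (witness_spec (p_full _ _ _ _ _))).
  assert (p_eta : forall f, F2 p (eta f) = vinv (eps (F1 p f)))
    by (intros; exact (witness_spec (p_full _ _ _ _ _))).
  exists G1, G2, eta, eps. repeat split.
  - intro g. apply p_faithful. rewrite p_G2, p_id, vcomp_id_l, vinv_l. reflexivity.
  - intros g g' g'' b b'. apply p_faithful.
    rewrite p_comp, !p_G2, !vcomp_assoc, vcompK. reflexivity.
  - intros f f' a. apply p_faithful.
    rewrite !p_comp, p_G2, !p_eta, !vcomp_assoc, vcompK. reflexivity.
  - intros g g' b. rewrite p_G2, !vcomp_assoc, vinv_r, vcomp_id_l. reflexivity.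
Qed.

Lemma cofibration_of_compD {X Y Z : Bigroupoid} (i : MorData X Y) (h : MorData Y Z) :
  cofibration (compD h i) -> cofibration i.
Proof.
  intros [inj0 inj1]. split.
  - intros A A' E. apply inj0. cbn. congruence.
  - intros A A' f g E. apply inj1. cbn. congruence.
Qed.

Section Lifting.
Context {A B X Y : Bigroupoid} (i : MorData A B) (p : MorData X Y).
Hypotheses (i_cof : cofibration i) (p_mor : IsMor p) (p_tf : trivial_fibration p).
Context (u : MorData A X) (v : MorData B Y).
Hypotheses (v_mor : IsMor v) (square : compD p u = compD v i).

Let i_inj0 := proj1 i_cof.
Let i_inj1 := proj2 i_cof.
Let p_faithful := weak_equivalence_faithful p (proj2 p_tf).
Let p_full := weak_equivalence_full p (proj2 p_tf).

Lemma lift0_exists (b : ob B) :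
  exists x : ob X, F0 p x = F0 v b /\ forall a, F0 i a = b -> x = F0 u a.
Proof.
  destruct (classic (exists a, F0 i a = b)) as [[a <-]|not_im].
  - exists (F0 u a). split.
    + exact (F0_eq square a).
    + intros a' E. rewrite (i_inj0 _ _ E). reflexivity.
  - destruct (trivial_fibration_surj_ob p p_tf (F0 v b)) as [x Ex].
    exists x. split; [exact Ex|]. intros a E. exfalso. apply not_im. eauto.
Qed.

Definition lift0 (b : ob B) : ob X := witness (lift0_exists b).

Lemma p_lift0 b : F0 p (lift0 b) = F0 v b.
Proof. exact (proj1 (witness_spec (lift0_exists b))). Qed.

Lemma lift0_i a : lift0 (F0 i a) = F0 u a.
Proof. exact (proj2 (witness_spec (lift0_exists (F0 i a))) a eq_refl). Qed.

Lemma lift1_exists {b b'} (g : hom b b') :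
  exists y : hom (lift0 b) (lift0 b'),
    JMeq (F1 p y) (F1 v g) /\
    forall a a' (f : hom a a'), F0 i a = b -> F0 i a' = b' -> JMeq (F1 i f) g -> JMeq y (F1 u f).
Proof.
  destruct (classic (exists a a' (f : hom a a'), F0 i a = b /\ F0 i a' = b' /\ JMeq (F1 i f) g))
    as [(a & a' & f & <- & <- & Ef)|not_im].
  - apply JMeq_eq in Ef. subst g.
    destruct (JMeq_hom_exists (lift0_i a) (lift0_i a') (F1 u f)) as [y Ey].
    exists y. split.
    + apply (JMeq_trans (y := F1 p (F1 u f))).
      { exact (JMeq_F1 p (lift0_i a) (lift0_i a') Ey). }
      exact (F1_eq square f).
    + intros a2 a2' f2 E E' Ef2.
      apply i_inj0 in E, E'. subst a2 a2'.
      apply JMeq_eq, i_inj1 in Ef2. subst f2. exact Ey.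
  - destruct (JMeq_hom_exists (p_lift0 b) (p_lift0 b') (F1 v g)) as [g' Eg].
    destruct (trivial_fibration_surj_hom p p_tf _ _ g') as [y <-].
    exists y. split; [exact Eg|].
    intros a a' f E E' Ef. exfalso. apply not_im. exists a, a', f. auto.
Qed.

Definition lift1 {b b'} (g : hom b b') : hom (lift0 b) (lift0 b') := witness (lift1_exists g).

Lemma p_lift1 {b b'} (g : hom b b') : JMeq (F1 p (lift1 g)) (F1 v g).
Proof. exact (proj1 (witness_spec (lift1_exists g))). Qed.

Lemma lift1_i {a a'} (f : hom a a') : JMeq (lift1 (F1 i f)) (F1 u f).
Proof. exact (proj2 (witness_spec (lift1_exists (F1 i f))) a a' f eq_refl eq_refl JMeq_refl). Qed.

Lemma lift2_exists {b b'} {g g' : hom b b'} (ga : cell g g') :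
  exists al : cell (lift1 g) (lift1 g'), JMeq (F2 p al) (F2 v ga).
Proof.
  destruct (JMeq_cell_exists (p_lift0 b) (p_lift0 b') (p_lift1 g) (p_lift1 g') (F2 v ga))
    as [be Ebe].
  destruct (p_full _ _ _ _ be) as [al <-]. eauto.
Qed.

Definition lift2 {b b'} {g g' : hom b b'} (ga : cell g g') : cell (lift1 g) (lift1 g') :=
  witness (lift2_exists ga).

Lemma p_lift2 {b b'} {g g' : hom b b'} (ga : cell g g') : JMeq (F2 p (lift2 ga)) (F2 v ga).
Proof. exact (witness_spec (lift2_exists ga)). Qed.

Lemma lift_phic_exists {b1 b2 b3} (g : hom b2 b3) (f : hom b1 b2) :
  exists al : cell (hc (lift1 g) (lift1 f)) (lift1 (hc g f)),
    JMeq (vcomp (F2 p al) (phic p (lift1 g) (lift1 f))) (phic v g f).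
Proof.
  destruct (JMeq_cell_exists (p_lift0 b1) (p_lift0 b3)
              (JMeq_hc (p_lift0 b1) (p_lift0 b2) (p_lift0 b3) (p_lift1 g) (p_lift1 f))
              (p_lift1 (hc g f)) (phic v g f)) as [be Ebe].
  destruct (p_full _ _ _ _ (vcomp be (vinv (phic p (lift1 g) (lift1 f))))) as [al Eal].
  exists al. rewrite Eal, vcompVK. exact Ebe.
Qed.

Definition lift_phic {b1 b2 b3} (g : hom b2 b3) (f : hom b1 b2) :
  cell (hc (lift1 g) (lift1 f)) (lift1 (hc g f)) := witness (lift_phic_exists g f).

Lemma lift_phiu_exists b :
  exists al : cell (id1 (lift0 b)) (lift1 (id1 b)),
    JMeq (vcomp (F2 p al) (phiu p (lift0 b))) (phiu v b).
Proof.
  destruct (JMeq_cell_exists (p_lift0 b) (p_lift0 b) (JMeq_id1 (p_lift0 b))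
              (p_lift1 (id1 b)) (phiu v b)) as [be Ebe].
  destruct (p_full _ _ _ _ (vcomp be (vinv (phiu p (lift0 b))))) as [al Eal].
  exists al. rewrite Eal, vcompVK. exact Ebe.
Qed.

Definition lift_phiu b : cell (id1 (lift0 b)) (lift1 (id1 b)) := witness (lift_phiu_exists b).

Lemma lift_phii_exists {b b'} (g : hom b b') :
  exists al : cell (inv1 (lift1 g)) (lift1 (inv1 g)),
    JMeq (vcomp (F2 p al) (phii p (lift1 g))) (phii v g).
Proof.
  destruct (JMeq_cell_exists (p_lift0 b') (p_lift0 b)
              (JMeq_inv1 (p_lift0 b) (p_lift0 b') (p_lift1 g))
              (p_lift1 (inv1 g)) (phii v g)) as [be Ebe].
  destruct (p_full _ _ _ _ (vcomp be (vinv (phii p (lift1 g))))) as [al Eal].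
  exists al. rewrite Eal, vcompVK. exact Ebe.
Qed.

Definition lift_phii {b b'} (g : hom b b') : cell (inv1 (lift1 g)) (lift1 (inv1 g)) :=
  witness (lift_phii_exists g).

Definition lift : MorData B X :=
  @Build_MorData B X lift0 (@lift1) (@lift2) (@lift_phic) lift_phiu (@lift_phii).

Lemma p_lift : compD p lift = v.
Proof.
  apply MorData_ext; intros; cbn.
  - apply p_lift0.
  - apply p_lift1.
  - apply p_lift2.
  - exact (witness_spec (lift_phic_exists _ _)).
  - exact (witness_spec (lift_phiu_exists _)).
  - exact (witness_spec (lift_phii_exists _)).
Qed.

Lemma lift_i : compD lift i = u.
Proof.
  apply (compD_faithful_inj p _ _ p_faithful).
  - exact lift0_i.
  - intros; exact (lift1_i f).
  - rewrite compD_assoc, p_lift by exact p_mor. symmetry. exact square.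
Qed.

Lemma lift_IsMor : IsMor lift.
Proof.
  apply (IsMor_reflect p lift p_mor p_faithful). rewrite p_lift. exact v_mor.
Qed.

End Lifting.

Lemma cofibration_lifting {A B X Y : Bigroupoid} (i : MorData A B) (p : MorData X Y) :
  cofibration i -> IsMor p -> trivial_fibration p -> lifting i p.
Proof.
  intros i_cof p_mor p_tf u v _ v_mor square.
  exists (lift i p i_cof p_tf u v square). split; [|split].
  - exact (lift_IsMor i p i_cof p_mor p_tf u v v_mor square).
  - exact (lift_i i p i_cof p_mor p_tf u v square).
  - exact (p_lift i p i_cof p_tf u v square).
Qed.

Section Retract.
Context {X Y Z : Bigroupoid} (p : MorData X Y) (q : MorData Z Y)
  (s : MorData X Z) (r : MorData Z X).
Hypotheses (p_mor : IsMor p) (q_tf : trivial_fibration q)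
  (rs : compD r s = idD X) (qs : compD q s = p) (pr : compD p r = q).

Let rs0 A : F0 r (F0 s A) = A := F0_eq rs A.
Let rs1 {A A'} (f : hom A A') : JMeq (F1 r (F1 s f)) f := F1_eq rs f.
Let rs2 {A A'} {f f' : hom A A'} (a : cell f f') : JMeq (F2 r (F2 s a)) a := F2_eq rs a.
Let qs0 A : F0 q (F0 s A) = F0 p A := F0_eq qs A.
Let qs1 {A A'} (f : hom A A') : JMeq (F1 q (F1 s f)) (F1 p f) := F1_eq qs f.
Let qs2 {A A'} {f f' : hom A A'} (a : cell f f') : JMeq (F2 q (F2 s a)) (F2 p a) := F2_eq qs a.
Let pr0 z : F0 p (F0 r z) = F0 q z := F0_eq pr z.
Let pr1 {z z'} (c : hom z z') : JMeq (F1 p (F1 r c)) (F1 q c) := F1_eq pr c.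
Let pr2 {z z'} {c c' : hom z z'} (ga : cell c c') : JMeq (F2 p (F2 r ga)) (F2 q ga) :=
  F2_eq pr ga.

Lemma retract_fibration : fibration p.
Proof.
  destruct q_tf as [[q_lift0 q_lift1] _]. split.
  - intros A' B b.
    destruct (JMeq_hom_exists eq_refl (qs0 A') b) as [b' Eb'].
    destruct (q_lift0 (F0 s A') B b') as (z & c & Ec).
    apply existT_inv_JMeq in Ec as [Ez Ec].
    destruct (JMeq_hom_exists eq_refl (eq_sym (rs0 A')) (F1 r c)) as [a Ea].
    exists (F0 r z), a. apply existT_JMeq.
    + rewrite pr0. exact Ez.
    + apply (JMeq_trans (JMeq_F1 p eq_refl (eq_sym (rs0 A')) Ea)).
      apply (JMeq_trans (pr1 c)), (JMeq_trans Ec), Eb'.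
  - intros A A' a' b beta.
    destruct (JMeq_hom_exists (qs0 A) (qs0 A') b) as [b' Eb'].
    destruct (JMeq_cell_exists (qs0 A) (qs0 A') Eb' (qs1 a') beta) as [beta' Ebeta'].
    destruct (q_lift1 (F0 s A) (F0 s A') (F1 s a') b' beta') as (c & ga & Ec).
    apply existT_inv_JMeq in Ec as [Ec Ega].
    destruct (JMeq_hom_exists (eq_sym (rs0 A)) (eq_sym (rs0 A')) (F1 r c)) as [a Ea].
    destruct (JMeq_cell_exists (eq_sym (rs0 A)) (eq_sym (rs0 A')) Ea (JMeq_sym (rs1 a'))
                (F2 r ga)) as [alpha Ealpha].
    assert (pa : JMeq (F1 p a) b).
    { apply (JMeq_trans (JMeq_F1 p (eq_sym (rs0 A)) (eq_sym (rs0 A')) Ea)).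
      apply (JMeq_trans (pr1 c)). rewrite Ec. exact Eb'. }
    exists a, alpha. apply existT_JMeq; [exact (JMeq_eq pa)|].
    apply (JMeq_trans (JMeq_F2 p (eq_sym (rs0 A)) (eq_sym (rs0 A')) Ea (JMeq_sym (rs1 a'))
                         Ealpha)).
    apply (JMeq_trans (pr2 ga)), (JMeq_trans Ega), Ebeta'.
Qed.

Lemma retract_faithful : faithful p.
Proof.
  intros A A' f f' a b Eab.
  assert (Esab : F2 s a = F2 s b).
  { apply (weak_equivalence_faithful q (proj2 q_tf)), JMeq_eq.
    apply (JMeq_trans (qs2 a)). rewrite Eab. exact (JMeq_sym (qs2 b)). }
  apply JMeq_eq, (JMeq_trans (JMeq_sym (rs2 a))). rewrite Esab. exact (rs2 b).
Qed.

Lemma retract_full : full p.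
Proof.
  intros A A' f f' b.
  destruct (JMeq_cell_exists (qs0 A) (qs0 A') (qs1 f) (qs1 f') b) as [b' Eb'].
  destruct (weak_equivalence_full q (proj2 q_tf) _ _ _ _ b') as [c Ec].
  destruct (JMeq_cell_exists (eq_sym (rs0 A)) (eq_sym (rs0 A')) (JMeq_sym (rs1 f))
              (JMeq_sym (rs1 f')) (F2 r c)) as [a Ea].
  exists a. apply JMeq_eq.
  apply (JMeq_trans (JMeq_F2 p (eq_sym (rs0 A)) (eq_sym (rs0 A')) (JMeq_sym (rs1 f))
                       (JMeq_sym (rs1 f')) Ea)).
  apply (JMeq_trans (pr2 c)). rewrite Ec. exact Eb'.
Qed.

Lemma retract_surj_hom (A A' : ob X) (g : hom (F0 p A) (F0 p A')) :
  exists f : hom A A', F1 p f = g.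
Proof.
  destruct (JMeq_hom_exists (qs0 A) (qs0 A') g) as [g' Eg'].
  destruct (trivial_fibration_surj_hom q q_tf _ _ g') as [c Ec].
  destruct (JMeq_hom_exists (eq_sym (rs0 A)) (eq_sym (rs0 A')) (F1 r c)) as [f Ef].
  exists f. apply JMeq_eq.
  apply (JMeq_trans (JMeq_F1 p (eq_sym (rs0 A)) (eq_sym (rs0 A')) Ef)).
  apply (JMeq_trans (pr1 c)). rewrite Ec. exact Eg'.
Qed.

Lemma retract_ess_surj (B : ob Y) : exists A : ob X, inhabited (hom B (F0 p A)).
Proof.
  destruct (proj1 (proj2 q_tf) B) as [z Hz].
  exists (F0 r z). rewrite pr0. exact Hz.
Qed.

Lemma trivial_fibration_retract : trivial_fibration p.
Proof.
  split; [exact retract_fibration | split; [exact retract_ess_surj|]].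
  intros A A'. apply hom_equivalence_of_full_faithful;
    [exact p_mor | exact retract_faithful | exact retract_full | exact (retract_surj_hom A A')].
Qed.

End Retract.

Theorem proposition4p1 :
  weak_factorization_system
    (fun X Y f => cofibration f)
    (fun X Y p => trivial_fibration p).
Proof.
  split; [|split].
  - intros X Y f f_mor. exists (fact_bigpd f), (fact_incl f), (fact_proj f).
    split; [exact (fact_incl_IsMor f f_mor)|].
    split; [exact (fact_proj_IsMor f)|].
    split; [exact (fact_incl_cofibration f)|].
    split; [exact (fact_proj_trivial_fibration f)|].
    exact (fact_proj_incl f).
  - intros A B i i_mor. split.
    + intros i_cof X Y p p_mor p_tf. exact (cofibration_lifting i p i_cof p_mor p_tf).
    + intros i_llp.
      destruct (i_llp _ _ (fact_proj i) (fact_proj_IsMor i) (fact_proj_trivial_fibration i)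
                  (fact_incl i) (idD B) (fact_incl_IsMor i i_mor) (idD_IsMor B))
        as (h & _ & hi & _).
      { rewrite fact_proj_incl, compD_idD_l. reflexivity. }
      apply (cofibration_of_compD i h). rewrite hi. exact (fact_incl_cofibration i).
  - intros X Y p p_mor. split.
    + intros p_tf A B i _ i_cof. exact (cofibration_lifting i p i_cof p_mor p_tf).
    + intros p_rlp.
      destruct (p_rlp _ _ (fact_incl p) (fact_incl_IsMor p p_mor) (fact_incl_cofibration p)
                  (idD X) (fact_proj p) (idD_IsMor X) (fact_proj_IsMor p))
        as (r & _ & rs & pr).
      { rewrite compD_idD_r, fact_proj_incl by exact p_mor. reflexivity. }
      exact (trivial_fibration_retract p (fact_proj p) (fact_incl p) r p_mor
               (fact_proj_trivial_fibration p) rs (fact_proj_incl p) pr).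
Qed.
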